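(* Let $R$ be a $*$-ring. Then $R$ is strongly $J$-$*$-clean if and only if (1) $R$ is strongly $*$-clean, and (2) $J(R)=\{x\in R \mid 1-x\in U(R)\}$.
   Context: All rings are associative with identity. A $*$-ring is a ring $R$ with an involution $*$, i.e. a map $a\mapsto a^*$ with $(a+b)^*=a^*+b^*$, $(ab)^*=b^*a^*$, $(a^* )^*=a$. $U(R)$ denotes the group of units and $J(R)$ the Jacobson radical of $R$. A projection is an element $e$ with $e^2=e=e^*$. $R$ is strongly $J$-$*$-clean if every $a\in R$ can be written $a=e+u$ with $e$ a projection, $u\in J(R)$ and $ae=ea$. $R$ is strongly $*$-clean if every $a\in R$ can be written $a=e+u$ with $e$ a projection, $u\in U(R)$ and $eu=ue$. *)

From mathcomp Require Import all_boot all_algebra.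
Set Implicit Arguments. Unset Strict Implicit. Unset Printing Implicit Defensive.
Import GRing.Theory.
Local Open Scope ring_scope.

Section StarRing.
Variable R : pzRingType.

Definition is_involution (s : R -> R) : Prop :=
  (forall a b, s (a + b) = s a + s b) /\
  (forall a b, s (a * b) = s b * s a) /\
  (forall a, s (s a) = a).

Definition is_unit (u : R) : Prop := exists v : R, u * v = 1 /\ v * u = 1.

Definition left_ideal (I : R -> Prop) : Prop :=
  I 0 /\ (forall x y, I x -> I y -> I (x - y)) /\ (forall r x, I x -> I (r * x)).

Definition proper_pred (I : R -> Prop) : Prop := exists x, ~ I x.

Definition maximal_left_ideal (I : R -> Prop) : Prop :=
  left_ideal I /\ proper_pred I /\
  (forall K : R -> Prop, left_ideal K -> proper_pred K ->
     (forall x, I x -> K x) -> forall x, K x -> I x).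

Definition jacobson (x : R) : Prop :=
  forall I : R -> Prop, maximal_left_ideal I -> I x.

Definition is_projection (s : R -> R) (e : R) : Prop := e * e = e /\ s e = e.

Definition strongly_J_star_clean (s : R -> R) : Prop :=
  forall a : R, exists e u : R,
    is_projection s e /\ jacobson u /\ a = e + u /\ a * e = e * a.

Definition strongly_star_clean (s : R -> R) : Prop :=
  forall a : R, exists e u : R,
    is_projection s e /\ is_unit u /\ a = e + u /\ e * u = u * e.

End StarRing.

From mathcomp Require Import all_boot all_algebra.
From mathcomp Require Import boolp classical_sets.
Set Implicit Arguments. Unset Strict Implicit. Unset Printing Implicit Defensive.
Import GRing.Theory.
Local Open Scope classical_set_scope.
Local Open Scope ring_scope.

(* By Krull's lemma, [1 - y] is a unit whenever [y] lies in J(R); so a unit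
   plus an element of J(R) is a unit, and the only idempotent in J(R) is [0].
   Since [2e - 1] is its own inverse for a projection [e], a strongly
   J-*-clean decomposition [a = e + u] gives the strongly *-clean one
   [a = (1 - e) + ((2e - 1) + u)]; and if [1 - x] is a unit, then in
   [x = e + u] the relation [(1 - x) e = - e u] puts [e] into J(R), so [e = 0]
   and [x = u] lies in J(R). Conversely, when J(R) is exactly the set of such
   [x], both [2] and [1 - v] for a unit [v] lie in J(R), and [a = f + v] gives
   [a = (1 - f) + (2f - (1 - v))]. *)

Section LeftIdeals.
Variable R : pzRingType.
Implicit Types (I L : set R) (F : set (set R)).

Lemma left_ideal_one I : left_ideal I -> I 1 -> forall x, I x.
Proof. by move=> [_ [_ Imul]] I1 x; rewrite -[x]mulr1; apply: Imul. Qed.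

Lemma left_ideal_proper I : left_ideal I -> proper_pred I -> ~ I 1.
Proof. by move=> idI [x nIx] I1; apply: nIx; exact: left_ideal_one. Qed.

(* Zorn is applied to the sets [A] with [A `|` L] a proper left ideal, so that
   the empty chain, whose union is [set0], is harmless. *)
Lemma left_ideal_chain_bigcup L F :
  left_ideal L -> ~ L 1 -> total_on F subset ->
  (forall X, F X -> left_ideal (X `|` L) /\ ~ (X `|` L) 1) ->
  left_ideal ((\bigcup_(X in F) X) `|` L) /\ ~ ((\bigcup_(X in F) X) `|` L) 1.
Proof.
move=> idL nL1 Ftot FP; set U := _ `|` L.
have lift X : F X -> X `|` L `<=` U.
  by move=> FX x [Xx|Lx]; [left; exists X|right].
have bound x y : U x -> U y -> exists I,
    [/\ left_ideal I /\ ~ I 1, I `<=` U, I x & I y].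
  move=> [[X FX Xx]|Lx] [[Y FY Yy]|Ly].
  - have [XY|YX] := Ftot X Y FX FY.
    + by exists (Y `|` L); split; [exact: FP|exact: lift|left; apply: XY|left].
    + by exists (X `|` L); split; [exact: FP|exact: lift|left|left; apply: YX].
  - by exists (X `|` L); split; [exact: FP|exact: lift|left|right].
  - by exists (Y `|` L); split; [exact: FP|exact: lift|right|left].
  - by exists L; split=> //; exact: subsetUr.
split; last by move=> U1; have [I [[_ nI1] _ I1 _]] := bound 1 1 U1 U1.
split; first by right; case: idL.
split.
- move=> x y Ux Uy; have [I [[[_ [Isub _]] _] IU Ix Iy]] := bound x y Ux Uy.
  exact/IU/Isub.
- move=> r x Ux; have [I [[[_ [_ Imul]] _] IU Ix _]] := bound x x Ux Ux.
  exact/IU/Imul.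
Qed.

Lemma exists_maximal_left_ideal L : left_ideal L -> ~ L 1 ->
  exists2 M, maximal_left_ideal M & L `<=` M.
Proof.
move=> idL nL1.
pose Q A := left_ideal (A `|` L) /\ ~ (A `|` L) 1.
have [A [[idM nM1] maxA]] : exists A, Q A /\ forall B, A `<` B -> ~ Q B.
  by apply: Zorn_bigcup => F FQ Ftot; apply: left_ideal_chain_bigcup.
exists (A `|` L); last exact: subsetUr.
split=> //; split; first by exists 1.
move=> K idK Kprop MK x Kx; apply: contrapT => nMx.
apply: (maxA K).
  by split=> [y Ay|KA]; [apply: MK; left|apply/nMx; left; apply: KA].
rewrite /Q setUidl; last by move=> y Ly; apply: MK; right.
by split=> //; apply: left_ideal_proper.
Qed.

End LeftIdeals.

Section Jacobson.
Variable R : pzRingType.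
Implicit Types (e r u v x y : R).

Lemma jacobsonM r x : jacobson x -> jacobson (r * x).
Proof.
by move=> Jx I maxI; case: (maxI) => [[_ [_ Imul]] _]; apply: Imul; exact: Jx.
Qed.

Lemma jacobsonB x y : jacobson x -> jacobson y -> jacobson (x - y).
Proof.
move=> Jx Jy I maxI; case: (maxI) => [[_ [Isub _]] _].
by apply: Isub; [exact: Jx|exact: Jy].
Qed.

Lemma jacobson_linv y : jacobson y -> exists v, v * (1 - y) = 1.
Proof.
move=> Jy; apply: contrapT => nlinv.
pose L := [set r * (1 - y) | r in [set: R]].
have idL : left_ideal L.
  split; first by exists 0; rewrite ?mul0r.
  split; first by move=> _ _ [r1 _ <-] [r2 _ <-]; exists (r1 - r2); rewrite ?mulrBl.
  by move=> r _ [r1 _ <-]; exists (r * r1); rewrite ?mulrA.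
have nL1 : ~ L 1 by move=> [r _ r1]; apply: nlinv; exists r.
have [M maxM LM] := exists_maximal_left_ideal idL nL1.
have [[M0 [Msub _]] [[z nMz] _]] := maxM.
have M1 : M 1.
  have My : M (0 - y) by apply: Msub; [exact: M0|exact: Jy].
  have M1y : M (1 - y) by apply: LM; exists 1; rewrite ?mul1r.
  by have := Msub _ _ M1y My; rewrite sub0r opprK subrK.
exact: nMz (left_ideal_one maxM.1 M1 z).
Qed.

Lemma jacobson_unit y : jacobson y -> is_unit (1 - y).
Proof.
move=> Jy; have [v vy] := jacobson_linv Jy.
have [w wv] : exists w, w * v = 1.
  have := jacobson_linv (jacobsonM (- v) Jy).
  by rewrite mulNr opprK -{1}vy mulrBr mulr1 subrK.
have wE : w = 1 - y by rewrite -[w]mulr1 -{1}vy mulrA wv mul1r.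
by exists v; split=> //; rewrite -wE.
Qed.

Lemma is_unitM u v : is_unit u -> is_unit v -> is_unit (u * v).
Proof.
move=> [u' [uu' u'u]] [v' [vv' v'v]]; exists (v' * u'); split.
  by rewrite mulrA -(mulrA u) vv' mulr1.
by rewrite mulrA -(mulrA v') u'u mulr1.
Qed.

(* [u + x = u * (1 + u^-1 x)] *)
Lemma is_unitDjacobson u x : is_unit u -> jacobson x -> is_unit (u + x).
Proof.
move=> Uu Jx; have [u' [uu' _]] := Uu.
have -> : u + x = u * (1 - (- (u' * x))).
  by rewrite opprK mulrDr mulr1 mulrA uu' mul1r.
by apply: is_unitM => //; apply: jacobson_unit; rewrite -mulNr; exact: jacobsonM.
Qed.

Lemma jacobson_idem_eq0 e : jacobson e -> e * e = e -> e = 0.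
Proof.
move=> Je ee; have [w [ew _]] := jacobson_unit Je.
by rewrite -[e]mulr1 -ew mulrA mulrBr mulr1 ee subrr mul0r.
Qed.

Lemma is_unit_reflection e : e * e = e -> is_unit (e *+ 2 - 1).
Proof.
move=> ee; suff tt : (e *+ 2 - 1) * (e *+ 2 - 1) = 1 by exists (e *+ 2 - 1).
rewrite mulrBl mulrBr !mulr1 mul1r mulrnAl mulrnAr ee -mulrnA.
by rewrite -[(2 * 2)%N]/(2 + 2)%N mulrnDr addrK opprB subrKC.
Qed.

End Jacobson.

Section StarClean.
Variables (R : pzRingType) (s : R -> R).
Hypothesis hs : is_involution s.

Lemma involution1 : s 1 = 1.
Proof. by case: hs => [_ [sM sK]]; have := sM 1 (s 1); rewrite mul1r sK mul1r. Qed.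

Lemma involutionB x y : s (x - y) = s x - s y.
Proof.
by case: hs => [sD _]; apply/eqP; rewrite eq_sym subr_eq -sD subrK.
Qed.

Lemma projectionC e : is_projection s e -> is_projection s (1 - e).
Proof.
move=> [ee se]; split; last by rewrite involutionB involution1 se.
by rewrite mulrBl !mulrBr !mulr1 !mul1r ee subrr subr0.
Qed.

Lemma strongly_J_star_clean_star_clean :
  strongly_J_star_clean s -> strongly_star_clean s.
Proof.
move=> sJc a; have [e [u [pe [Ju [aE ae]]]]] := sJc a.
have ca : GRing.comm a (1 - e) by apply: commrB; [exact: commr1|].
exists (1 - e), (a - (1 - e)); split; first exact: projectionC.
split.
  have -> : a - (1 - e) = e *+ 2 - 1 + u.
    by rewrite aE opprB addrAC addrCA mulr2n addrA.
  by apply: is_unitDjacobson Ju; apply: is_unit_reflection; case: pe.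
split; first by rewrite addrC subrK.
by apply: commrB; [exact: commr_sym|exact: commr_refl].
Qed.

Lemma strongly_J_star_clean_jacobson (x : R) :
  strongly_J_star_clean s -> is_unit (1 - x) -> jacobson x.
Proof.
move=> sJc [w [_ wx]]; have [e [u [[ee _] [Ju [xE xe]]]]] := sJc x.
have xeE : (1 - x) * e = - (e * u).
  by rewrite mulrBl mul1r xe xE mulrDr ee opprD addrA subrr sub0r.
have Je : jacobson e.
  have -> : e = (- (w * e)) * u by rewrite mulNr -mulrA -mulrN -xeE mulrA wx mul1r.
  exact: jacobsonM.
by rewrite xE (jacobson_idem_eq0 Je ee) add0r.
Qed.

Lemma star_clean_J_star_clean :
  strongly_star_clean s -> (forall x : R, is_unit (1 - x) -> jacobson x) ->
  strongly_J_star_clean s.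
Proof.
move=> sc unitJ a; have [f [v [pf [Uv [aE fv]]]]] := sc a.
have J1v : jacobson (1 - v) by apply: unitJ; rewrite opprB addrC subrK.
have J2 : jacobson (1 *+ 2 : R).
  apply: unitJ; exists (-1); rewrite -[1 *+ 2]/(1 + 1) opprD addrA subrr sub0r.
  by rewrite mulrNN mul1r.
exists (1 - f), (f *+ 2 - (1 - v)); split; first exact: projectionC.
split; first by rewrite -mulr_natr; apply: jacobsonB => //; exact: jacobsonM.
split; first by rewrite aE opprB mulr2n !addrA subrK -(addrA 1) [1 + _]addrC addrK.
have cfa : GRing.comm f a by rewrite aE; apply: commrD.
by apply: commrB; [exact: commr1|exact: commr_sym].
Qed.

End StarClean.

Theorem theorem3p4 (R : pzRingType) (s : R -> R) (hs : is_involution s) :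
  strongly_J_star_clean s <->
  (strongly_star_clean s /\
   (forall x : R, jacobson x <-> is_unit (1 - x))).
Proof.
split=> [sJc | [sc unitJ]]; last by apply: star_clean_J_star_clean => // x /unitJ.
split; first exact: strongly_J_star_clean_star_clean.
by move=> x; split; [exact: jacobson_unit|exact: strongly_J_star_clean_jacobson].
Qed.
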